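(* Fix $c\in(0,1)$ and a countable collection of languages $\mathcal{L}$. There exists an element-based generator that generates in the limit from $\mathcal{L}$ under enumerations with $c$-noise and arbitrary omissions (i.e., for every $K\in\mathcal{L}$ and every enumeration of $K$ with $c$-noise and arbitrary omissions there is $n^\star$ with $w_n\in K$ for all $n\ge n^\star$) if and only if the following condition holds: for every non-empty finite subcollection $\mathcal{L}'\subseteq\mathcal{L}$ and every enumeration $x_{1:\infty}$, either (a) there is some $L'\in\mathcal{L}'$ such that $R(L';x_{1:n})>c$ for infinitely many $n$, or (b) $|\bigcap_{L\in\mathcal{L}'}L|=\infty$.
   Context: The universe is $U=\mathbb{N}$. A language is an infinite subset of $U$; a collection is a countable family of languages. An enumeration is a sequence $x_1,x_2,\dots$ of distinct elements of $U$; $S_n=\{x_1,\dots,x_n\}$. The empirical noise rate is $R(L;x_{1:n})=\frac1n|\{t\le n:x_t\notin L\}|$. An enumeration of $L$ with $c$-noise is a sequence in which every element of $L$ appears exactly once and there is $n^\star$ with $R(L;x_{1:n})\le c$ for all $n\ge n^\star$. An enumeration of $K$ with $c$-noise and arbitrary omissions is an enumeration with $c$-noise of some $\hat K\subseteq K$ with $|\hat K|=\infty$. An element-based generator is a sequence of maps $\mathds{G}_n$ that, given $x_1,\dots,x_n$ (and knowledge of $\mathcal{L}$, but not of $K$), outputs $w_n\in U\setminus(S_n\cup\{w_1,\dots,w_{n-1}\})$. *)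

From Stdlib Require Import Reals List.
From mathcomp Require Import ssreflect ssrbool choice.
Import ListNotations.
Open Scope R_scope.

(* Universe U = nat.  A subset of U is a predicate nat -> bool (classically,
   every subset of nat is of this form). *)
Definition lang := nat -> bool.

Definition infinite_set (A : lang) : Prop :=
  forall m : nat, exists y : nat, (m <= y)%nat /\ A y = true.

Definition is_language (A : lang) : Prop := infinite_set A.

(* An enumeration x_1, x_2, ... is encoded 0-based: x_t = x (t-1);
   distinct elements = injectivity. *)
Definition enumeration (x : nat -> nat) : Prop :=
  forall s t : nat, x s = x t -> s = t.

Definition prefix (x : nat -> nat) (n : nat) : list nat := map x (seq 0 n).

Fixpoint noise_count (A : lang) (x : nat -> nat) (n : nat) : nat :=
  match n with
  | O => O
  | S k => (noise_count A x k + (if A (x k) then 0 else 1))%nat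
  end.

Definition noise_rate (A : lang) (x : nat -> nat) (n : nat) : R :=
  INR (noise_count A x n) / INR n.

Definition enum_with_noise (c : R) (A : lang) (x : nat -> nat) : Prop :=
  enumeration x /\
  (forall y, A y = true -> exists t, x t = y) /\
  exists nstar : nat, forall n : nat, (1 <= n)%nat -> (nstar <= n)%nat ->
    noise_rate A x n <= c.

Definition enum_with_noise_omissions (c : R) (K : lang) (x : nat -> nat) : Prop :=
  exists Khat : lang,
    (forall y, Khat y = true -> K y = true) /\ infinite_set Khat /\
    enum_with_noise c Khat x.

(* An element-based generator: G maps the observed prefix [x_1; ...; x_n]
   (n >= 1) to w_n; it may depend on the collection but not on K. *)
Definition gen_output (G : list nat -> nat) (x : nat -> nat) (n : nat) : nat :=
  G (prefix x n).

Definition element_based_generator (G : list nat -> nat) : Prop :=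
  forall x : nat -> nat, enumeration x ->
  forall n : nat, (1 <= n)%nat ->
    ~ In (gen_output G x n) (prefix x n) /\
    (forall m : nat, (1 <= m)%nat -> (m < n)%nat ->
       gen_output G x m <> gen_output G x n).

Definition generates_in_limit_noisy_omissions (c : R) (I : Type) (L : I -> lang)
    (G : list nat -> nat) : Prop :=
  forall (i : I) (x : nat -> nat), enum_with_noise_omissions c (L i) x ->
    exists nstar : nat, forall n : nat, (1 <= n)%nat -> (nstar <= n)%nat ->
      L i (gen_output G x n) = true.

Definition noisy_condition (c : R) (I : Type) (L : I -> lang) : Prop :=
  forall (l : list I), l <> [] ->
  forall x : nat -> nat, enumeration x ->
    (exists i, In i l /\
       forall m : nat, exists n : nat, (m < n)%nat /\ noise_rate (L i) x n > c)
    \/ infinite_set (fun y => forallb (fun i => L i y) l).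

(* Necessity: if every member of a finite subcollection eventually keeps noise
   rate at most c along x while their intersection is finite, then x is itself a
   c-noisy enumeration with omissions of each member (a noise rate at most c < 1
   forces infinitely many hits), so a successful generator eventually outputs
   inside that finite intersection, contradicting distinctness of its outputs.
   Sufficiency: at time n, for each threshold t, intersect the languages of code
   at most t whose noise rate stayed at most c on (t, n]; output a fresh element
   of this intersection for the largest t <= n for which it is infinite. Once t
   bounds both the code of the target K and the time after which K stays clean,
   and n exceeds the violation times of the other languages of code at most t,
   the languages intersected at t are exactly those clean forever after t; by
   the condition their intersection is infinite, so the chosen threshold is at
   least t and K is among the languages intersected there. *)

From Stdlib Require Import Reals List Lia Lra Classical ClassicalEpsilon.
From mathcomp Require Import ssreflect ssrbool choice.
Import ListNotations.
Open Scope R_scope.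

Definition infinitely_many (P : nat -> Prop) : Prop :=
  forall m, exists y, (m <= y)%nat /\ P y.

Definition clean_from (c : R) (A : lang) (x : nat -> nat) (T : nat) : Prop :=
  forall n, (T < n)%nat -> noise_rate A x n <= c.

Lemma noise_count_ext (A B : lang) (x y : nat -> nat) n :
  (forall t, (t < n)%nat -> A (x t) = B (y t)) ->
  noise_count A x n = noise_count B y n.
Proof.
  induction n as [|n IH]; intros Hxy; simpl; auto.
  rewrite Hxy ?IH //; intros; apply Hxy; lia.
Qed.

Lemma noise_count_antimono (A B : lang) x n :
  (forall y, B y = true -> A y = true) ->
  (noise_count A x n <= noise_count B x n)%nat.
Proof.
  intros HBA; induction n as [|n IH]; simpl; auto.
  destruct (B (x n)) eqn:E.
  - rewrite (HBA _ E). lia.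
  - destruct (A (x n)); lia.
Qed.

Lemma noise_count_hits (A : lang) x n :
  (noise_count A x n + length (filter (fun t => A (x t)) (seq 0 n)))%nat = n.
Proof.
  induction n as [|n IH]; [reflexivity|].
  rewrite seq_S filter_app length_app. cbn [noise_count filter length].
  rewrite Nat.add_0_l. destruct (A (x n)); cbn [length]; lia.
Qed.

Lemma noise_rate_antimono (A B : lang) x n :
  (forall y, B y = true -> A y = true) ->
  noise_rate A x n <= noise_rate B x n.
Proof.
  intros HBA. unfold noise_rate, Rdiv. apply Rmult_le_compat_r.
  - destruct n as [|n]; [simpl; rewrite Rinv_0; lra|].
    left; apply Rinv_0_lt_compat, lt_0_INR; lia.
  - apply le_INR, noise_count_antimono; auto.
Qed.

Definition stream_of (l : list nat) (t : nat) : nat := nth t l 0%nat.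

Lemma length_prefix x n : length (prefix x n) = n.
Proof. unfold prefix. rewrite length_map length_seq. reflexivity. Qed.

Lemma stream_of_prefix x n t : (t < n)%nat -> stream_of (prefix x n) t = x t.
Proof.
  intros Ht. unfold stream_of.
  rewrite (nth_indep _ _ (x 0%nat)); [|rewrite length_prefix; lia].
  unfold prefix. rewrite map_nth seq_nth; auto.
Qed.

Lemma noise_rate_prefix (A : lang) x n m : (m <= n)%nat ->
  noise_rate A (stream_of (prefix x n)) m = noise_rate A x m.
Proof.
  intros Hm. unfold noise_rate. do 2 f_equal.
  apply noise_count_ext. intros t Ht. rewrite stream_of_prefix; auto. lia.
Qed.

Lemma NoDup_bounded_length (s : list nat) m :
  NoDup s -> (forall y, In y s -> (y < m)%nat) -> (length s <= m)%nat.
Proof.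
  intros Hs Hm. rewrite -(length_seq m 0). apply NoDup_incl_length; auto.
  intros y Hy. apply in_seq. specialize (Hm y Hy). lia.
Qed.

Lemma bounded_witnesses {A : Type} (l : list A) (Q : A -> nat -> Prop) :
  (forall a, In a l -> exists m, Q a m) ->
  exists N, forall a, In a l -> exists m, (m <= N)%nat /\ Q a m.
Proof.
  induction l as [|a l IH]; intros HQ.
  - exists 0%nat. intros a [].
  - destruct IH as [N HN]; [intros b Hb; apply HQ; right; auto|].
    destruct (HQ a (or_introl eq_refl)) as [ma Hma].
    exists (Nat.max N ma). intros b [<-|Hb].
    + exists ma. split; [lia|auto].
    + destruct (HN b Hb) as [m [Hm HQm]]. exists m. split; [lia|auto].
Qed.

Lemma finite_below_code {I : countType} (P : I -> Prop) K :
  exists l : list I, forall i, In i l <-> (pickle i < K)%nat /\ P i.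
Proof.
  induction K as [|K [l Hl]].
  - exists []. intros i. simpl. lia.
  - destruct (@pickle_inv I K) as [i0|] eqn:Ei0;
      [destruct (classic (P i0)) as [HP|HP]|].
    + exists (i0 :: l). intros i. simpl. rewrite Hl.
      assert (Hcode : pickle i0 = K) by (have := @pickle_invK I K; rewrite Ei0; auto).
      split.
      * intros [<-|[Hi HPi]]; split; auto; lia.
      * intros [Hi HPi]. destruct (Nat.eq_dec (pickle i) K) as [E|E]; [|right; split; auto; lia].
        left. rewrite -E pickleK_inv in Ei0. injection Ei0 as ->. reflexivity.
    + exists l. intros i. rewrite Hl. split; [intros [Hi HPi]; split; auto; lia|].
      intros [Hi HPi]. split; auto. destruct (Nat.eq_dec (pickle i) K) as [E|E]; [|lia].
      rewrite -E pickleK_inv in Ei0. injection Ei0 as <-. contradiction.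
    + exists l. intros i. rewrite Hl. split; [intros [Hi HPi]; split; auto; lia|].
      intros [Hi HPi]. split; auto. destruct (Nat.eq_dec (pickle i) K) as [E|E]; [|lia].
      rewrite -E pickleK_inv in Ei0. discriminate.
Qed.

Lemma low_noise_hits_infinite c (A : lang) x T :
  c < 1 -> enumeration x -> clean_from c A x T ->
  infinitely_many (fun y => A y = true /\ exists t, x t = y).
Proof.
  intros Hc Hx Hclean m. apply NNPP. intros Hfin.
  assert (Hbelow : forall t, A (x t) = true -> (x t < m)%nat).
  { intros t Ht. destruct (Nat.lt_ge_cases (x t) m) as [Hlt|Hge]; [exact Hlt|].
    exfalso. apply Hfin. exists (x t). split; [lia|]. split; [auto|exists t; auto]. }
  assert (Hhits : forall n, (length (filter (fun t => A (x t)) (seq 0 n)) <= m)%nat).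
  { intros n. rewrite -(length_map x). apply NoDup_bounded_length.
    - apply NoDup_map_NoDup_ForallPairs; [intros a b _ _; apply Hx|].
      apply NoDup_filter, seq_NoDup.
    - intros y Hy. apply in_map_iff in Hy. destruct Hy as [t [<- Ht]].
      apply filter_In in Ht. apply Hbelow, Ht. }
  destruct (INR_unbounded (INR m / (1 - c))) as [n0 Hn0].
  set n := Nat.max n0 (S T).
  assert (Hn : 0 < INR n) by (apply lt_0_INR; unfold n; lia).
  assert (Hn0n : INR n0 <= INR n) by (apply le_INR; unfold n; lia).
  assert (Hrate : noise_rate A x n <= c) by (apply Hclean; unfold n; lia).
  assert (Hnoise : INR (noise_count A x n) <= c * INR n).
  { replace (INR (noise_count A x n)) with (noise_rate A x n * INR n)
      by (unfold noise_rate; field; lra).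
    apply Rmult_le_compat_r; lra. }
  assert (Hm : INR m < (1 - c) * INR n).
  { replace (INR m) with (INR m / (1 - c) * (1 - c)) by (field; lra).
    rewrite Rmult_comm. apply Rmult_lt_compat_l; lra. }
  have Hsum := f_equal INR (noise_count_hits A x n).
  have Hle := le_INR _ _ (Hhits n).
  rewrite plus_INR in Hsum. lra.
Qed.

Definition range_of (x : nat -> nat) : lang :=
  fun y => if excluded_middle_informative (exists t, x t = y) then true else false.

Lemma range_ofP x y : range_of x y = true <-> exists t, x t = y.
Proof.
  unfold range_of. destruct (excluded_middle_informative _); split; auto.
  discriminate.
Qed.

Lemma low_noise_enum_with_omissions c (A : lang) x T :
  c < 1 -> enumeration x -> clean_from c A x T -> enum_with_noise_omissions c A x.
Proof.
  intros Hc Hx Hclean.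
  assert (Hseen : forall t, range_of x (x t) = true) by (intros t; apply range_ofP; exists t; auto).
  exists (fun y => A y && range_of x y). split; [|split; [|split; [|split]]].
  - intros y Hy. apply andb_prop in Hy. apply Hy.
  - intros m. destruct (low_noise_hits_infinite c A x T Hc Hx Hclean m)
      as [y [Hmy [HAy Hy]]].
    exists y. split; auto. rewrite HAy. apply range_ofP, Hy.
  - exact Hx.
  - intros y Hy. apply andb_prop in Hy. apply range_ofP, Hy.
  - exists (S T). intros n _ Hn. unfold noise_rate.
    rewrite (noise_count_ext _ A x x n); [apply Hclean; lia|].
    intros t _. rewrite Hseen Bool.andb_true_r. reflexivity.
Qed.

Lemma generator_outputs_unbounded G x :
  element_based_generator G -> enumeration x ->
  forall N m, exists n, (1 <= n)%nat /\ (N <= n)%nat /\ (m <= gen_output G x n)%nat.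
Proof.
  intros HG Hx N m. apply NNPP. intros Hbounded.
  set N1 := Nat.max N 1.
  assert (Hnd : NoDup (map (gen_output G x) (seq N1 (S m)))).
  { apply NoDup_map_NoDup_ForallPairs; [|apply seq_NoDup].
    intros a b Ha Hb Hab. apply in_seq in Ha, Hb.
    destruct (Nat.lt_total a b) as [Hlt|[Heq|Hlt]]; [exfalso| exact Heq |exfalso].
    - apply (proj2 (HG x Hx b ltac:(lia)) a); auto; lia.
    - apply (proj2 (HG x Hx a ltac:(lia)) b); auto; lia. }
  have Hlen := NoDup_bounded_length _ m Hnd.
  rewrite length_map length_seq in Hlen. apply Nat.lt_irrefl with m, Hlen.
  intros y Hy. apply in_map_iff in Hy. destruct Hy as [n [<- Hn]]. apply in_seq in Hn.
  destruct (Nat.lt_ge_cases (gen_output G x n) m) as [Hlt|Hge]; [exact Hlt|].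
  exfalso. apply Hbounded. exists n. repeat split; auto; lia.
Qed.

Lemma generation_implies_condition c {I : countType} (L : I -> lang) G :
  c < 1 -> element_based_generator G -> generates_in_limit_noisy_omissions c I L G ->
  noisy_condition c I L.
Proof.
  intros Hc HG Hgen l _ x Hx.
  destruct (classic (exists i, In i l /\
    forall m, exists n, (m < n)%nat /\ noise_rate (L i) x n > c)) as [Hnoisy|Hclean];
    [left; exact Hnoisy|right].
  assert (Hlim : forall i, In i l -> exists N, forall n, (1 <= n)%nat -> (N <= n)%nat ->
            L i (gen_output G x n) = true).
  { intros i Hi. apply Hgen.
    assert (HT : exists T, clean_from c (L i) x T).
    { apply NNPP. intros Hno. apply Hclean. exists i. split; auto.
      intros T. apply NNPP. intros Hno'. apply Hno. exists T. intros n Hn.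
      apply Rnot_gt_le. intros Hgt. apply Hno'. exists n. auto. }
    destruct HT as [T HT]. apply (low_noise_enum_with_omissions c _ _ T); auto. }
  destruct (bounded_witnesses l _ Hlim) as [N HN].
  intros m. destruct (generator_outputs_unbounded G x HG Hx N m) as [n [Hn1 [HNn Hmn]]].
  exists (gen_output G x n). split; auto. apply forallb_forall. intros i Hi.
  destruct (HN i Hi) as [Ni [HNi Hlimi]]. apply Hlimi; lia.
Qed.

Lemma notin_above_list_max (l : list nat) y : (list_max l < y)%nat -> ~ In y l.
Proof.
  intros Hy Hin. assert (Hle : (list_max l <= list_max l)%nat) by lia.
  apply list_max_le, Forall_forall with (x := y) in Hle; [lia | exact Hin].
Qed.

(* The fallback keeps the output fresh even when [P] has no usable element. *)
Definition fresh (P : nat -> Prop) (forb : list nat) : nat :=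
  match excluded_middle_informative (exists y, P y /\ ~ In y forb) with
  | left H => proj1_sig (constructive_indefinite_description _ H)
  | right _ => S (list_max forb)
  end.

Lemma fresh_notin P forb : ~ In (fresh P forb) forb.
Proof.
  unfold fresh. destruct (excluded_middle_informative _) as [H|_].
  - exact (proj2 (proj2_sig (constructive_indefinite_description _ H))).
  - apply notin_above_list_max. lia.
Qed.

Lemma fresh_spec P forb : infinitely_many P -> P (fresh P forb).
Proof.
  intros Hinf. unfold fresh. destruct (excluded_middle_informative _) as [H|Hno].
  - exact (proj1 (proj2_sig (constructive_indefinite_description _ H))).
  - exfalso. destruct (Hinf (S (list_max forb))) as [y [Hy HPy]].
    apply Hno. exists y. split; auto. apply notin_above_list_max. lia.
Qed.

Section Generator.

Variables (c : R) (I : countType) (L : I -> lang).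

Definition clean_after (l : list nat) (t : nat) (i : I) : Prop :=
  forall m, (t < m <= length l)%nat -> noise_rate (L i) (stream_of l) m <= c.

Definition consensus (l : list nat) (t : nat) (y : nat) : Prop :=
  forall i, (pickle i <= t)%nat -> clean_after l t i -> L i y = true.

Fixpoint last_rich (l : list nat) (k : nat) : nat :=
  match k with
  | O => O
  | S k' => if excluded_middle_informative (infinitely_many (consensus l k)) then k
            else last_rich l k'
  end.

Definition target (l : list nat) : nat -> Prop := consensus l (last_rich l (length l)).

(* [outputs r] lists the outputs w_n, ..., w_1 given the reversed observation
   [r = [x_n; ...; x_1]]. *)
Fixpoint outputs (r : list nat) : list nat :=
  match r with
  | [] => []
  | _ :: r' => let o := outputs r' in fresh (target (rev r)) (rev r ++ o) :: o
  end.

Definition noisy_gen (l : list nat) : nat := hd 0%nat (outputs (rev l)).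

Lemma rev_prefix_S x k : rev (prefix x (S k)) = x k :: rev (prefix x k).
Proof. unfold prefix. rewrite seq_S map_app rev_app_distr. reflexivity. Qed.

Lemma outputs_prefix_S x k :
  outputs (rev (prefix x (S k))) =
  gen_output noisy_gen x (S k) :: outputs (rev (prefix x k)).
Proof. unfold gen_output, noisy_gen. rewrite rev_prefix_S. reflexivity. Qed.

Lemma gen_output_S x k :
  gen_output noisy_gen x (S k) =
  fresh (target (prefix x (S k))) (prefix x (S k) ++ outputs (rev (prefix x k))).
Proof.
  unfold gen_output at 1, noisy_gen. rewrite rev_prefix_S. cbn [outputs hd].
  rewrite -rev_prefix_S rev_involutive. reflexivity.
Qed.

Lemma in_outputs x k m :
  (1 <= m <= k)%nat -> In (gen_output noisy_gen x m) (outputs (rev (prefix x k))).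
Proof.
  induction k as [|k IH]; intros Hm; [lia|].
  rewrite outputs_prefix_S. destruct (Nat.eq_dec m (S k)) as [->|Hne]; [left; reflexivity|].
  right. apply IH. lia.
Qed.

Lemma noisy_gen_valid : element_based_generator noisy_gen.
Proof.
  intros x _ [|k] Hn; [lia|].
  rewrite gen_output_S. split.
  - intros Hin. exact (fresh_notin _ _ (in_or_app _ _ _ (or_introl Hin))).
  - intros m Hm1 Hm2 Heq. have Hin := in_outputs x k m ltac:(lia).
    rewrite Heq in Hin. exact (fresh_notin _ _ (in_or_app _ _ _ (or_intror Hin))).
Qed.

Lemma last_rich_spec l k t :
  (t <= k)%nat -> infinitely_many (consensus l t) ->
  (t <= last_rich l k)%nat /\ infinitely_many (consensus l (last_rich l k)).
Proof.
  induction k as [|k IH]; intros Htk Hinf.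
  - simpl. replace t with 0%nat in Hinf by lia. auto.
  - simpl. destruct (excluded_middle_informative _) as [H|H]; [auto|].
    destruct (Nat.eq_dec t (S k)) as [->|Hne]; [contradiction|].
    apply IH; auto. lia.
Qed.

Lemma noisy_gen_in_clean_language x k t i :
  (t <= S k)%nat -> infinitely_many (consensus (prefix x (S k)) t) ->
  (pickle i <= t)%nat -> (forall m, (t < m <= S k)%nat -> noise_rate (L i) x m <= c) ->
  L i (gen_output noisy_gen x (S k)) = true.
Proof.
  intros Htk Hinf Hi Hclean. rewrite gen_output_S.
  have Hlen := length_prefix x (S k).
  destruct (last_rich_spec (prefix x (S k)) (length (prefix x (S k))) t
              ltac:(lia) Hinf) as [Ht Hrich].
  apply (fresh_spec (target (prefix x (S k))) _ Hrich); [lia|].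
  intros m Hm. rewrite noise_rate_prefix; [apply Hclean|]; lia.
Qed.

Lemma consensus_eventually_infinite x T i :
  noisy_condition c I L -> enumeration x ->
  (pickle i <= T)%nat -> clean_from c (L i) x T ->
  exists N, forall n, (N <= n)%nat -> infinitely_many (consensus (prefix x n) T).
Proof.
  intros Hcond Hx HiT Hclean.
  destruct (finite_below_code (fun j => clean_from c (L j) x T) (S T)) as [lJ HlJ].
  destruct (finite_below_code (fun j => ~ clean_from c (L j) x T) (S T)) as [lV HlV].
  assert (HilJ : In i lJ) by (apply HlJ; split; [lia|exact Hclean]).
  assert (Hinter : infinitely_many (fun y => forallb (fun j => L j y) lJ = true)).
  { destruct (Hcond lJ ltac:(intros E; rewrite E in HilJ; destruct HilJ) x Hx)
      as [[j [Hj Hnoisy]] | Hinter]; [exfalso | exact Hinter].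
    destruct (Hnoisy T) as [n [HTn Hn]].
    assert (Hle := proj2 (proj1 (HlJ j) Hj) n HTn). lra. }
  assert (Hviolation : forall j, In j lV -> exists m, (T < m)%nat /\ noise_rate (L j) x m > c).
  { intros j Hj. apply NNPP. intros Hno. apply (proj2 (proj1 (HlV j) Hj)).
    intros m Hm. apply Rnot_gt_le. intros Hgt. apply Hno. exists m. auto. }
  destruct (bounded_witnesses lV _ Hviolation) as [N HN].
  exists N. intros n HNn m. destruct (Hinter m) as [y [Hmy Hy]].
  exists y. split; auto. intros j Hj Hclean_j.
  rewrite forallb_forall in Hy. apply Hy, HlJ. split; [lia|].
  apply NNPP. intros Hdirty.
  destruct (HN j ltac:(apply HlV; split; [lia|exact Hdirty])) as [m' [Hm'N [HTm' Hgt]]].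
  have Hle := Hclean_j m'. rewrite length_prefix noise_rate_prefix in Hle; [|lia].
  specialize (Hle ltac:(lia)). lra.
Qed.

Lemma condition_implies_generation :
  noisy_condition c I L -> generates_in_limit_noisy_omissions c I L noisy_gen.
Proof.
  intros Hcond i x [Khat [HKhat [_ [Hx [_ [nstar Hnstar]]]]]].
  set T := Nat.max (pickle i) nstar.
  assert (Hclean : clean_from c (L i) x T).
  { intros n Hn. eapply Rle_trans; [apply noise_rate_antimono, HKhat|].
    apply Hnstar; lia. }
  destruct (consensus_eventually_infinite x T i Hcond Hx ltac:(lia) Hclean) as [N HN].
  exists (Nat.max N (S T)). intros [|k] _ Hk; [lia|].
  apply (noisy_gen_in_clean_language x k T i); [lia | apply HN; lia | lia |].
  intros m Hm. apply Hclean. lia.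
Qed.

End Generator.

Theorem theorem5p4 (c : R) (I : countType) (L : I -> lang) :
  0 < c < 1 ->
  (forall i : I, is_language (L i)) ->
  (exists G : list nat -> nat,
      element_based_generator G /\ generates_in_limit_noisy_omissions c I L G)
  <-> noisy_condition c I L.
Proof.
  intros Hc _. split.
  - intros [G [HG Hgen]]. exact (generation_implies_condition c L G ltac:(lra) HG Hgen).
  - intros Hcond. exists (noisy_gen c I L).
    split; [apply noisy_gen_valid | apply condition_implies_generation, Hcond].
Qed.
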